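(* For every integer $n>0$ and every integer $j$ with $0\le j\le n$, the number $\Phi_n=\prod_{p\text{ prime},\ \{n/p\}\in[2/3,1)}p$ divides $\binom{n+j}{n}\binom{2n-j}{n}$.
   Context: $\{x\}$ denotes the fractional part of $x$. *)

From mathcomp Require Import all_boot all_order all_algebra.
Set Implicit Arguments. Unset Strict Implicit. Unset Printing Implicit Defensive.
Import Order.TTheory GRing.Theory Num.Theory.

Definition fracQ (x : rat) : rat := x - (Num.floor x)%:~R.

(* Phi_n = prod of primes p with {n/p} in [2/3, 1).  For a prime p > 2n we
   have {n/p} = n/p < 1/2, so all such primes lie in [0, 2n]; the product is
   taken over that finite range. *)
Definition Phi (n : nat) : nat :=
  \prod_(0 <= p < (2 * n).+1 | prime p &&
      ((2%:Q / 3%:Q <= fracQ (n%:Q / p%:Q)) && (fracQ (n%:Q / p%:Q) < 1))%R) p.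

(** Kummer: the exponent of [p] in ['C(a + b, a)] is the number of carries
    when adding [a] and [b] in base [p]; in particular [p] divides the binomial
    coefficient as soon as the last digits carry.  If [{n/p} >= 2/3], i.e. the
    last digit [r] of [n] satisfies [3 r >= 2 p], then adding [j] to [n] or
    adding [n - j] to [n] carries in the last digit: if [n + j] does not, the
    last digit of [j] is below [p - r], so that of [n - j] is [r] minus it,
    and [r + (r - (p - r)) >= p].  Since ['C(2n - j, n) = 'C(n + (n - j), n)],
    each such prime divides one of the two factors. *)

From mathcomp Require Import all_boot all_order all_algebra.
From mathcomp Require Import zify ring lra.

Set Implicit Arguments.
Unset Strict Implicit.
Unset Printing Implicit Defensive.

Import Order.TTheory GRing.Theory Num.Theory.

Lemma logn_fact_le p m N : prime p -> m <= N ->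
  logn p m`! = \sum_(1 <= k < N.+1) m %/ p ^ k.
Proof.
move=> p_pr le_mN; rewrite logn_fact // [RHS](big_cat_nat _ (n := m.+1)) //=.
rewrite [X in _ + X]big1_seq ?addn0 // => k /andP[_].
rewrite mem_index_iota => /andP[lt_mk _]; apply: divn_small.
exact: ltn_trans lt_mk (ltn_expl k (prime_gt1 p_pr)).
Qed.

Lemma logn_bin_carries p a b : prime p ->
  logn p 'C(a + b, a) = \sum_(1 <= k < (a + b).+1) (p ^ k <= a %% p ^ k + b %% p ^ k).
Proof.
move=> p_pr.
have binE : 'C(a + b, a) * (a`! * b`!) = (a + b)`!.
  by rewrite -{2}(addKn a b) bin_fact // leq_addr.
have /eqP : logn p (a + b)`! = logn p 'C(a + b, a) + (logn p a`! + logn p b`!).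
  by rewrite -binE !lognM ?bin_gt0 ?leq_addr ?muln_gt0 ?fact_gt0.
rewrite !(@logn_fact_le p _ (a + b)) ?leq_addr ?leq_addl // -big_split /=.
under eq_bigr => k _ do rewrite divnD ?expn_gt0 ?prime_gt0 //.
by rewrite !big_split /= addnC eqn_add2r => /eqP.
Qed.

Lemma dvdn_bin_carry p a b : prime p -> p <= a %% p + b %% p -> p %| 'C(a + b, a).
Proof.
move=> p_pr carry.
have ab_gt0 : 0 < a + b.
  by have := leq_mod a p; have := leq_mod b p; have := prime_gt0 p_pr; lia.
have : 0 < logn p 'C(a + b, a).
  by rewrite logn_bin_carries // big_ltn // expn1 carry.
by rewrite logn_gt0 mem_primes => /and3P[].
Qed.

Lemma dvdn_prod_primes (s : seq nat) X : uniq s ->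
  {in s, forall p, prime p /\ p %| X} -> \prod_(p <- s) p %| X.
Proof.
elim: s => [|p s IHs] /=; first by rewrite big_nil dvd1n.
move=> /andP[p_notin_s uniq_s] s_pr_dvd.
have [p_pr p_dvd] := s_pr_dvd p (mem_head p s).
have IH : \prod_(q <- s) q %| X.
  by apply: IHs => // q q_s; apply: s_pr_dvd; rewrite inE q_s orbT.
have coprime_p_s : coprime p (\prod_(q <- s) q).
  rewrite big_seq; apply: (big_ind (coprime p)) => [|x y|q q_s].
  - exact: coprimen1.
  - by rewrite coprimeMr => -> ->.
  have [q_pr _] : prime q /\ q %| X by apply: s_pr_dvd; rewrite inE q_s orbT.
  rewrite prime_coprime // dvdn_prime2 //.
  by apply: contraNN p_notin_s => /eqP ->.
by rewrite big_cons Gauss_dvd // p_dvd IH.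
Qed.

Lemma carry_add_or_sub p n j : 0 < p -> j <= n -> 2 * p <= 3 * (n %% p) ->
  p <= n %% p + j %% p \/ p <= n %% p + (n - j) %% p.
Proof.
move=> p_gt0 le_jn big_r.
have := modnD (n - j) j p_gt0; rewrite subnK //.
have := ltn_pmod n p_gt0; have := ltn_pmod j p_gt0; have := ltn_pmod (n - j) p_gt0.
case: leqP; lia.
Qed.

Local Open Scope ring_scope.

Lemma fracQ_ratio (n p : nat) : (0 < p)%N ->
  fracQ (n%:R / p%:R) = (n %% p)%N%:R / p%:R.
Proof.
move=> p_gt0.
have p_pos : (0 : rat) < p%:R by rewrite ltr0n.
have ratioE : n%:R / p%:R = (n %/ p)%N%:R + (n %% p)%N%:R / p%:R :> rat.
  rewrite {1}(divn_eq n p) natrD natrM; field; lra.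
have rem_ge0 : (0 : rat) <= (n %% p)%N%:R / p%:R by rewrite divr_ge0 ?ler0n.
have rem_lt1 : (n %% p)%N%:R / p%:R < 1 :> rat.
  by rewrite ltr_pdivrMr // mul1r ltr_nat ltn_pmod.
have floorE : Num.floor (n%:R / p%:R : rat) = (n %/ p)%N.
  by apply: floor_def; rewrite ratioE intrD pmulrn; apply/andP; split; lra.
by rewrite /fracQ floorE ratioE pmulrn addrC addKr.
Qed.

Lemma two_thirds_le_fracQ (n p : nat) : (0 < p)%N ->
  (2%:Q / 3%:Q <= fracQ (n%:Q / p%:Q)) = (2 * p <= 3 * (n %% p))%N.
Proof.
move=> p_gt0; have p_pos : (0 : rat) < p%:R by rewrite ltr0n.
rewrite -!pmulrn fracQ_ratio // ler_pdivrMr // mulrAC ler_pdivlMr //.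
by rewrite mulrC -!natrM ler_nat mulnC [X in (_ <= X)%N]mulnC.
Qed.

Local Close Scope ring_scope.

Theorem mainTheorem15 (n j : nat) :
  0 < n -> j <= n -> Phi n %| 'C(n + j, n) * 'C(2 * n - j, n).
Proof.
move=> _ le_jn; rewrite /Phi -big_filter.
apply: dvdn_prod_primes => [|p]; first by rewrite filter_uniq ?iota_uniq.
rewrite mem_filter => /andP[/andP[p_pr /andP[frac_ge _]] _]; split=> //.
have p_gt0 := prime_gt0 p_pr.
rewrite two_thirds_le_fracQ // in frac_ge.
have [carry_j | carry_nj] := carry_add_or_sub p_gt0 le_jn frac_ge.
  by apply: dvdn_mulr; apply: dvdn_bin_carry.
rewrite (_ : 2 * n - j = n + (n - j)); last by lia.
by apply: dvdn_mull; apply: dvdn_bin_carry.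
Qed.
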